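(* Let $P$ be an ergodic and reversible transition matrix on a finite set $\mathcal{X}$. Then $\gamma_{\mathsf{dps}}=\gamma_\star$.
   Context: $P$ is row-stochastic, ergodic (primitive), with unique stationary distribution $\pi>0$, and reversible: $\pi(x)P(x,x')=\pi(x')P(x',x)$; then $P$ has real spectrum and $\gamma_\star=1-\max\{|\lambda|:\lambda\in\sigma(P),\lambda\ne1\}$ is its absolute spectral gap. $P^\star(x,x')=\pi(x')P(x',x)/\pi(x)$; for a transition matrix $Q$ with stationary $\pi$, $\mathscr{S}_\pi(Q)=\begin{pmatrix}0&Q\\Q^\star&0\end{pmatrix}$ and $\gamma_\ddagger(Q)=1-\mu_2$ where $\mu_2$ is the second largest eigenvalue (counted with multiplicity) of $\mathscr{S}_\pi(Q)$. $\gamma_{\mathsf{dps}}=\max_{k\ge1}\gamma_\ddagger(P^k)/k$. *)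

From HB Require Import structures.
From mathcomp Require Import all_boot all_order all_algebra.
From mathcomp Require Import reals.
Set Implicit Arguments. Unset Strict Implicit. Unset Printing Implicit Defensive.
Import Order.TTheory GRing.Theory Num.Theory.
Local Open Scope ring_scope.

Section Defs.
Variable R : realType.

Definition row_stochastic n (P : 'M[R]_n) : Prop :=
  (forall i j, 0 <= P i j) /\ (forall i, \sum_j P i j = 1).

(* ergodic = primitive: some power has all entries positive *)
Definition primitive n (P : 'M[R]_n) : Prop :=
  exists k : nat, forall i j, 0 < (P ^+ k) i j.

Definition stationary n (P : 'M[R]_n) (pi : 'I_n -> R) : Prop :=
  (forall i, 0 <= pi i) /\ (\sum_i pi i = 1) /\
  (forall j, \sum_i pi i * P i j = pi j).

Definition reversible n (P : 'M[R]_n) (pi : 'I_n -> R) : Prop :=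
  forall i j, pi i * P i j = pi j * P j i.

Definition tstar n (pi : 'I_n -> R) (Q : 'M[R]_n) : 'M[R]_n :=
  \matrix_(i, j) (pi j * Q j i / pi i).

Definition dilation n (pi : 'I_n -> R) (Q : 'M[R]_n) : 'M[R]_(n + n) :=
  block_mx 0 Q (tstar pi Q) 0.

(* mu is the second largest eigenvalue of A, eigenvalues counted with
   (algebraic) multiplicity: s lists all real roots of the characteristic
   polynomial with multiplicity, and mu is the second entry of s sorted
   in decreasing order. *)
Definition second_largest_eig m (A : 'M[R]_m) (mu : R) : Prop :=
  exists (s : seq R) (q : {poly R}),
    char_poly A = q * \prod_(x <- s) ('X - x%:P) /\
    (forall x, ~~ root q x) /\
    (1 < size s)%N /\
    mu = nth 0 (sort (fun x y => y <= x) s) 1.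

Definition gamma_ddagger n (pi : 'I_n -> R) (Q : 'M[R]_n) (g : R) : Prop :=
  exists mu, second_largest_eig (dilation pi Q) mu /\ g = 1 - mu.

Definition abs_spectral_gap n (P : 'M[R]_n) (g : R) : Prop :=
  exists lam, eigenvalue P lam /\ lam != 1 /\ g = 1 - `|lam| /\
    (forall lam', eigenvalue P lam' -> lam' != 1 -> `|lam'| <= `|lam|).

Definition gamma_dps n (pi : 'I_n -> R) (P : 'M[R]_n) (g : R) : Prop :=
  (exists k : nat, (0 < k)%N /\
     exists gk, gamma_ddagger pi (P ^+ k) gk /\ gk / k%:R = g) /\
  (forall k : nat, (0 < k)%N ->
     forall gk, gamma_ddagger pi (P ^+ k) gk -> gk / k%:R <= g).

End Defs.

From HB Require Import structures.
From mathcomp Require Import all_boot all_order all_algebra.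
From mathcomp Require Import reals complex.
From mathcomp Require Import zify ring.
Set Implicit Arguments. Unset Strict Implicit. Unset Printing Implicit Defensive.
Import Order.TTheory GRing.Theory Num.Theory.
Local Open Scope ring_scope.

(* Reversibility makes [P] self-adjoint in l^2(pi): it is similar to a symmetric
   matrix, so its spectrum is real, and every [P ^+ k] is its own time reversal,
   so the dilation S_pi(P^k) is [[0, P^k], [P^k, 0]], whose spectrum is
   spec(P^k) together with -spec(P^k).  Since [P] is primitive, 1 is a simple
   eigenvalue and -1 is not an eigenvalue, so the second largest eigenvalue of
   S_pi(P) is max {|l| : l <> 1} = 1 - gamma_star, i.e. gamma_ddagger(P) =
   gamma_star.  For every k, both 1 and (1 - gamma_star)^k are eigenvalues of
   S_pi(P^k), so gamma_ddagger(P^k) <= 1 - (1 - gamma_star)^k <= k gamma_star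
   by Bernoulli's inequality. *)

Section LinearAlgebra.
Variables (F : fieldType) (n : nat).
Implicit Types (A M X Y : 'M[F]_n) (a : F) (d : 'I_n -> F).

Lemma char_poly_conj X Y A :
  X *m Y = 1%:M -> char_poly (X *m A *m Y) = char_poly A.
Proof.
move=> XY; rewrite /char_poly /char_poly_mx.
have -> : 'X%:M - map_mx polyC (X *m A *m Y) =
          map_mx polyC X *m ('X%:M - map_mx polyC A) *m map_mx polyC Y.
  rewrite mulmxBr mulmxBl -!map_mxM mul_mx_scalar -scalemxAl -map_mxM XY.
  by rewrite map_mx1 scalemx1.
by rewrite !det_mulmx mulrAC -det_mulmx -map_mxM XY map_mx1 det1 mul1r.
Qed.

Lemma char_poly_diagonalizable M d A :
  M \in unitmx -> A = invmx M *m diag_mx (\row_i d i) *m M ->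
  char_poly A = \prod_i ('X - (d i)%:P).
Proof.
move=> Mu ->; rewrite char_poly_conj ?mulVmx //.
rewrite char_poly_trig ?diag_mx_is_trig //.
by apply: eq_bigr => i _; rewrite !mxE eqxx mulr1n.
Qed.

(* The rows of the identity indexed by [{i | d i = a}] are eigenvectors of the
   diagonal matrix; multiplying by [M] maps them into the eigenspace of [A]. *)
Lemma card_eigen_diagonalizable M d A a :
  M \in unitmx -> A = invmx M *m diag_mx (\row_i d i) *m M ->
  (#|[pred i | d i == a]| <= n - \rank (A - a%:M)%R)%N.
Proof.
move=> Mu defA; set T := [pred i | d i == a].
pose E : 'M[F]_(#|T|, n) := \matrix_(k, j) (j == enum_val k)%:R.
have ED : E *m diag_mx (\row_i d i) = a *: E.
  apply/matrixP => k j; rewrite mul_mx_diag !mxE.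
  have := enum_valP k; rewrite inE => /eqP dk.
  by case: eqVneq => [->|_]; rewrite ?dk ?mul1r ?mulr1 ?mul0r ?mulr0.
have EE : E *m E^T = 1%:M.
  apply/matrixP => k l; rewrite !mxE (bigD1 (enum_val k)) //= big1 ?addr0.
    by rewrite !mxE eqxx mul1r (inj_eq enum_val_inj) eq_sym.
  by move=> j /negbTE jk; rewrite !mxE jk mul0r.
have rankE : \rank E = #|T|.
  apply/eqP; rewrite eqn_leq rank_leq_row.
  by apply: (@mulmx1_min_rank _ _ _ _ E 1%:M E^T); rewrite mul1mx.
have EM_ker : (E *m M <= kermx (A - a%:M))%MS.
  rewrite sub_kermx mulmxBr defA !mulmxA mulmxK // ED.
  by rewrite -scalemxAl mul_mx_scalar subrr.
rewrite -mxrank_ker -rankE -(mxrankMfree _ (_ : row_free M)) ?row_free_unit //.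
exact: mxrankS.
Qed.

Lemma char_poly_antidiag_block (Q : 'M[F]_n) :
  char_poly (block_mx 0 Q Q 0 : 'M_(n + n)) = char_poly Q * char_poly (- Q).
Proof.
rewrite /char_poly /char_poly_mx.
set x : 'M[{poly F}]_n := 'X%:M; set B := map_mx polyC Q.
have -> : 'X%:M - map_mx polyC (block_mx 0 Q Q 0) = block_mx x (- B) (- B) x.
  by rewrite map_block_mx map_mx0 (scalar_mx_block n n) opp_block_mx
    add_block_mx !oppr0 !addr0 !add0r.
have triang : block_mx x (- B) (- B) x *m block_mx x 0 B 1%:M =
              block_mx (x *m x - B *m B) (- B) 0 x.
  rewrite mulmx_block !mulmx0 !mulmx1 !add0r !mulNmx.
  by rewrite /x (scalar_mxC _ B) addNr.
have dx : \det x != 0 by rewrite /x det_scalar expf_neq0 // polyX_eq0.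
apply: (mulIf dx).
have := congr1 determinant triang.
rewrite det_mulmx det_lblock det1 mulr1 det_ublock => ->; congr (_ * _).
have -> : x *m x - B *m B = (x - B) *m (x - map_mx polyC (- Q)).
  rewrite map_mxN opprK -/B mulmxDr !mulmxBl /x scalar_mxC.
  by rewrite (scalar_mxC _ B) addrA subrK.
by rewrite det_mulmx.
Qed.

End LinearAlgebra.

Lemma eigenvalue_mem_roots (F : fieldType) n (A : 'M[F]_n) (q : {poly F}) s x :
  char_poly A = q * \prod_(y <- s) ('X - y%:P) -> (forall y, ~~ root q y) ->
  eigenvalue A x -> x \in s.
Proof.
move=> cA q_roots; rewrite eigenvalue_root_char cA rootM (negbTE (q_roots x)).
by rewrite root_prod_XsubC.
Qed.

Lemma eigenvalue_split_char_poly (F : fieldType) n (A : 'M[F]_n) s :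
  char_poly A = \prod_(y <- s) ('X - y%:P) ->
  forall x, eigenvalue A x = (x \in s).
Proof. by move=> cA x; rewrite eigenvalue_root_char cA root_prod_XsubC. Qed.

Lemma mulmx_exp_eigen (R : comNzRingType) n (M : 'M[R]_n) (u : 'cV[R]_n) a :
  M *m u = a *: u -> forall k, M ^+ k *m u = a ^+ k *: u.
Proof.
move=> Mu; elim=> [|k IH]; first by rewrite !expr0 scale1r mul1mx.
by rewrite exprS -mulmxE -mulmxA IH -scalemxAr Mu scalerA -exprSr.
Qed.

Lemma exp_mulmx_eigen (R : comNzRingType) n (M : 'M[R]_n) (v : 'rV[R]_n) a :
  v *m M = a *: v -> forall k, v *m M ^+ k = a ^+ k *: v.
Proof.
move=> vM; elim=> [|k IH]; first by rewrite !expr0 scale1r mulmx1.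
by rewrite exprSr -mulmxE mulmxA IH -scalemxAl vM scalerA -exprSr.
Qed.

Lemma eigenvalue_antidiag_block_norm (R : realFieldType) n (Q : 'M[R]_n)
    (v : 'rV[R]_n) c :
  v *m Q = c *: v -> v != 0 -> eigenvalue (block_mx 0 Q Q 0 : 'M_(n + n)) `|c|.
Proof.
move=> vQ v_neq0; apply/eigenvalueP.
have [c_ge0|c_lt0] := lerP 0 c.
  exists (row_mx v v); last by rewrite row_mx_eq0 negb_and v_neq0.
  by rewrite mul_row_block !mulmx0 add0r addr0 vQ ger0_norm // scale_row_mx.
exists (row_mx v (- v)); last by rewrite row_mx_eq0 negb_and v_neq0.
rewrite mul_row_block !mulmx0 add0r addr0 mulNmx vQ ltr0_norm // scale_row_mx.
by rewrite !scaleNr scalerN opprK.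
Qed.

Lemma col_neq0P (R : nmodType) m (u : 'cV[R]_m) :
  reflect (exists i, u i 0 != 0) (u != 0).
Proof.
apply: (iffP idP) => [u_neq0|[i ui_neq0]]; last first.
  by apply: contraNneq ui_neq0 => ->; rewrite mxE.
apply/existsP; apply: contraNT u_neq0; rewrite negb_exists => /forallP u0.
by apply/eqP/colP => i; rewrite mxE; apply/eqP; rewrite -[_ == _]negbK u0.
Qed.

Section RealSymmetric.
Variables (R : rcfType) (n : nat) (S : 'M[R]_n).
Hypothesis S_sym : S^T = S.
Local Notation toC := (real_complex R).
Local Open Scope complex_scope.

Lemma real_symmetric_diagonalizable :
  exists2 M : 'M[R[i]]_n, M \in unitmx & exists d : 'I_n -> R,
    map_mx toC S = invmx M *m diag_mx (\row_i (d i)%:C) *m M.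
Proof.
have S_herm : map_mx toC S \is hermsymmx.
  apply: realsym_hermsym.
    apply/is_hermitianmxP; rewrite expr0 scale1r; apply/matrixP => i j.
    by rewrite !mxE /= -[in LHS]S_sym mxE.
  by apply/mxOverP => i j; rewrite mxE; apply/complex_realP; exists (S i j).
set A := map_mx toC S in S_herm *.
exists (spectralmx A); first exact: spectral_unit.
exists (fun i => complex.Re (spectral_diag A 0 i)).
have /orthomx_spectralP defA := hermitian_normalmx S_herm.
rewrite {1}defA; congr (_ *m diag_mx _ *m _); apply/rowP => i; rewrite mxE.
have /mxOverP/(_ 0 i) := hermitian_spectral_diag_real S_herm.
by move=> /RRe_real ->.
Qed.

Lemma real_symmetric_spectrum : exists e : 'I_n -> R, [/\
  char_poly S = \prod_i ('X - (e i)%:P),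
  char_poly (- S) = \prod_i ('X - (- e i)%:P) &
  (#|[pred i | e i == 1%R]| <= n - \rank (S - 1%:M)%R)%N].
Proof.
have [M M_unit [e defS]] := real_symmetric_diagonalizable.
have defNS : map_mx toC (- S) = invmx M *m diag_mx (\row_i (- e i)%:C) *m M.
  rewrite map_mxN defS -mulNmx -mulmxN; congr (_ *m _ *m _).
  by apply/matrixP => i j; rewrite !mxE -mulNrn rmorphN.
exists e; split.
- apply: (map_poly_inj toC).
  rewrite map_char_poly (char_poly_diagonalizable M_unit defS).
  by rewrite rmorph_prod; apply: eq_bigr => i _; rewrite /= map_polyXsubC.
- apply: (map_poly_inj toC).
  rewrite map_char_poly (char_poly_diagonalizable M_unit defNS).
  by rewrite rmorph_prod; apply: eq_bigr => i _; rewrite /= map_polyXsubC.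
- rewrite -(mxrank_map toC) map_mxB map_mx1.
  have := card_eigen_diagonalizable 1 M_unit defS.
  rewrite (eq_card (B := [pred i | e i == 1%R])) // => i.
  by rewrite !inE fmorph_eq1.
Qed.

End RealSymmetric.

Section SecondLargest.
Variable R : realDomainType.
Implicit Types (s : seq R) (a b x : R).

Local Notation ge := (fun x y : R => y <= x).
Local Notation second_largest s := (nth 0 (sort ge s) 1).

Lemma ge_total : total ge.
Proof. by move=> x y; rewrite le_total. Qed.

Lemma ge_trans : transitive ge.
Proof. by move=> y x z h1 h2; apply: le_trans h2 h1. Qed.

Lemma mem_sort_ge s x : x \in s ->
  x = nth 0 (sort ge s) 0 \/ x <= second_largest s.
Proof.
rewrite -(mem_sort ge); have := sort_sorted ge_total s.
case: (sort ge s) => [|x0 [|x1 t]] //=; first by rewrite inE => _ /eqP; left.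
case/andP => _ /(order_path_min ge_trans)/allP t_le.
by rewrite !inE => /orP [/eqP|/orP [/eqP ->|/t_le]]; [left|right|right].
Qed.

Lemma second_largest_ge s a b : a \in s -> b \in s -> b < a ->
  b <= second_largest s.
Proof.
move=> /mem_sort_ge [a0|a_le] /mem_sort_ge [b0|b_le] //.
- by rewrite a0 b0 ltxx.
- by move=> /ltW/le_trans; apply.
Qed.

Lemma second_largest_eq s b : count_mem 1 s = 1%N -> b \in s -> b < 1 ->
  (forall x, x \in s -> x != 1 -> x <= b) -> second_largest s = b.
Proof.
move=> c1 bs b1 le_b.
have s1 : 1 \in s by rewrite -has_pred1 has_count c1.
apply/eqP; rewrite eq_le (second_largest_ge s1 bs b1) andbT.
have := sort_sorted ge_total s; have := count_sort ge (pred1 1) s.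
have {}le_b x : x \in sort ge s -> x != 1 -> x <= b.
  by rewrite mem_sort; exact: le_b.
rewrite -(mem_sort ge) in bs; rewrite -(mem_sort ge) in s1.
case: (sort ge s) le_b bs s1 => [|x0 [|x1 t]] //= le_b.
  by rewrite !inE => /eqP b_eq /eqP one_eq; rewrite b_eq -one_eq ltxx in b1.
move=> _ _; rewrite c1 => c1' /andP [x10 _].
have [x11|] := eqVneq x1 1; last by apply: le_b; rewrite !inE eqxx orbT.
have [x01|x0n1] := eqVneq x0 1; first by move: c1' => /=; rewrite x01 x11 eqxx.
have := le_b x0; rewrite inE eqxx => /(_ isT x0n1) x0b.
by move: b1; rewrite ltNge (le_trans _ x0b) // -x11.
Qed.

End SecondLargest.

Lemma one_sub_exprn_le (R : numDomainType) (b : R) k : 0 <= b -> b <= 1 ->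
  1 - b ^+ k <= k%:R * (1 - b).
Proof.
move=> b_ge0 b_le1; elim: k => [|k IH]; first by rewrite expr0 subrr mul0r.
rewrite exprS mulrSr mulrDl mul1r.
have -> : 1 - b * b ^+ k = (1 - b ^+ k) + b ^+ k * (1 - b).
  by rewrite mulrBr mulr1 addrA subrK mulrC.
by rewrite lerD // ler_piMl ?subr_ge0 // exprn_ile1.
Qed.

Lemma normr_eq1_neq1 (R : realDomainType) (a : R) :
  `|a| = 1 -> a != 1 -> a = -1.
Proof. by case: ler0P => _ a1; rewrite -a1 ?opprK // eqxx. Qed.

(* At a maximum [i0] of [u], the convex combination [u i0 = \sum_k M i0 k u k]
   forces every [u k] to equal [u i0]. *)
Lemma pos_stochastic_fixed_const (R : realDomainType) n (M : 'M[R]_n)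
    (u : 'cV[R]_n) :
  (forall i, \sum_j M i j = 1) -> (forall i j, 0 < M i j) -> M *m u = u ->
  forall i j, u i 0 = u j 0.
Proof.
move=> M1 M_gt0 Mu i j.
have [i0 _ u_max] : exists2 i0, true & forall k, u k 0 <= u i0 0.
  case: (@arg_maxP _ _ _ i xpredT (fun k => u k 0)) => // i0 _ H.
  by exists i0 => // k; apply: H.
have sum0 : \sum_k M i0 k * (u i0 0 - u k 0) = 0.
  under eq_bigr do rewrite mulrBr.
  rewrite sumrB -mulr_suml M1 mul1r.
  have := congr1 (fun w : 'cV[R]_n => w i0 0) Mu.
  by rewrite mxE => ->; rewrite subrr.
have terms_ge0 k : true -> 0 <= M i0 k * (u i0 0 - u k 0).
  by move=> _; rewrite mulr_ge0 ?subr_ge0 // ltW.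
have u_eq k : u k 0 = u i0 0.
  have /eqP := @psumr_eq0P _ _ _ _ terms_ge0 sum0 k isT.
  by rewrite mulf_eq0 (gt_eqF (M_gt0 _ _)) /= subr_eq0 => /eqP.
by rewrite !u_eq.
Qed.

Section Stochastic.
Variables (R : realType) (n : nat).
Implicit Types (P : 'M[R]_n) (u : 'cV[R]_n).

Lemma row_stochastic_exp P :
  row_stochastic P -> forall k, row_stochastic (P ^+ k).
Proof.
move=> [P_ge0 P_sum1]; elim=> [|k [Pk_ge0 Pk_sum1]].
  rewrite expr0; split=> [i j|i]; first by rewrite mxE ler0n.
  rewrite (bigD1 i) //= big1 ?addr0 => [|j /negbTE ji]; rewrite mxE ?eqxx //.
  by rewrite eq_sym ji.
rewrite exprS -mulmxE; split=> [i j|i].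
  by rewrite mxE; apply: sumr_ge0 => l _; rewrite mulr_ge0.
under eq_bigr do rewrite mxE.
rewrite exchange_big /=.
under eq_bigr do rewrite -mulr_sumr Pk_sum1 mulr1.
exact: P_sum1.
Qed.

Lemma row_stochastic_expD_gt0 P a : row_stochastic P ->
  (forall i j, 0 < (P ^+ a) i j) -> forall b i j, 0 < (P ^+ (b + a)) i j.
Proof.
move=> hP Pa_gt0 b i j; have [Pb_ge0 Pb_sum1] := row_stochastic_exp hP b.
rewrite exprD -mulmxE mxE lt_def sumr_ge0 ?andbT; last first.
  by move=> k _; rewrite mulr_ge0 // ltW.
have terms_ge0 k : true -> 0 <= (P ^+ b) i k * (P ^+ a) k j.
  by move=> _; rewrite mulr_ge0 // ltW.
apply/negP => /eqP/(psumr_eq0P terms_ge0) terms0.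
suff : \sum_k (P ^+ b) i k = 0 by rewrite Pb_sum1 => /eqP; rewrite oner_eq0.
apply: big1 => k _; have /eqP := terms0 k isT.
by rewrite mulf_eq0 (gt_eqF (Pa_gt0 _ _)) orbF => /eqP.
Qed.

(* Evaluate the eigen-equation at a coordinate where [|u|] is maximal. *)
Lemma row_stochastic_eigen_norm_le1 P u a : row_stochastic P ->
  P *m u = a *: u -> u != 0 -> `|a| <= 1.
Proof.
move=> [P_ge0 P_sum1] Pu /col_neq0P [i ui_neq0].
have [i0 _ u_max] : exists2 i0, true & forall k, `|u k 0| <= `|u i0 0|.
  case: (@arg_maxP _ _ _ i xpredT (fun k => `|u k 0|)) => // i0 _ H.
  by exists i0 => // k; apply: H.
have ui0_gt0 : 0 < `|u i0 0|.
  by rewrite (lt_le_trans _ (u_max i)) // normr_gt0.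
rewrite -(ler_pM2r ui0_gt0) mul1r -normrM.
have := congr1 (fun w : 'cV[R]_n => w i0 0) Pu; rewrite !mxE => <-.
apply: le_trans (ler_norm_sum _ _ _) _.
rewrite -[leRHS]mul1r -(P_sum1 i0) mulr_suml.
apply: ler_sum => k _; rewrite normrM (ger0_norm (P_ge0 _ _)).
by rewrite ler_wpM2l.
Qed.

End Stochastic.

Section Reversible.
Variables (R : realType) (n : nat) (P : 'M[R]_n) (pi : 'I_n -> R).
Hypotheses (hP : row_stochastic P) (hprim : primitive P)
  (hrev : reversible P pi) (pi_gt0 : forall i, 0 < pi i).

Let pi_neq0 i : pi i != 0. Proof. by rewrite gt_eqF. Qed.

Lemma reversible_exp k : reversible (P ^+ k) pi.
Proof.
elim: k => [|k IH] i j.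
  by rewrite expr0 !mxE eq_sym; case: eqVneq => [->|_]; rewrite ?mulr0n ?mulr0.
rewrite [in LHS]exprS [in RHS]exprSr -!mulmxE !mxE !mulr_sumr.
by apply: eq_bigr => l _; rewrite (mulrA (pi i)) hrev mulrAC IH -mulrA.
Qed.

Lemma tstar_reversible (Q : 'M[R]_n) : reversible Q pi -> tstar pi Q = Q.
Proof.
move=> Qrev; apply/matrixP => i j.
by rewrite mxE -Qrev [pi i * _]mulrC mulrK // unitfE.
Qed.

Lemma reversible_right_eigen (v : 'rV[R]_n) a : v *m P = a *: v ->
  P *m (\col_i (v 0 i / pi i)) = a *: \col_i (v 0 i / pi i).
Proof.
move=> vP; apply/colP => i; rewrite !mxE.
have -> : \sum_j P i j * (\col_j (v 0 j / pi j)) j 0 =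
          (\sum_j v 0 j * P j i) / pi i.
  rewrite mulr_suml; apply: eq_bigr => j _; rewrite mxE.
  have -> : P i j = pi j * P j i / pi i.
    by rewrite -hrev [pi i * _]mulrC mulrK ?unitfE.
  by field; rewrite !pi_neq0.
have := congr1 (fun w : 'rV[R]_n => w 0 i) vP; rewrite !mxE => ->.
by rewrite mulrA.
Qed.

Lemma reversible_right_eigenvector (v : 'rV[R]_n) a :
  v *m P = a *: v -> v != 0 -> exists2 u : 'cV[R]_n, u != 0 & P *m u = a *: u.
Proof.
move=> vP v_neq0; exists (\col_i (v 0 i / pi i)).
  2: exact: reversible_right_eigen.
apply: contraNneq v_neq0 => u0; apply/eqP/rowP => i.
have := congr1 (fun w : 'cV[R]_n => w i 0) u0; rewrite !mxE.
by move/eqP; rewrite mulf_eq0 invr_eq0 (negbTE (pi_neq0 i)) orbF => /eqP.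
Qed.

Lemma reversible_fixed_row_prop (v : 'rV[R]_n) : v *m P = v ->
  forall i j, v 0 i / pi i = v 0 j / pi j.
Proof.
case: hprim => m Pm_gt0 vP i j.
have := reversible_right_eigen (a := 1) (v := v); rewrite scale1r => /(_ vP).
move=> /mulmx_exp_eigen/(_ m); rewrite expr1n scale1r => Pm_fixed.
have [_ Pm_sum1] := row_stochastic_exp hP m.
by have := pos_stochastic_fixed_const Pm_sum1 Pm_gt0 Pm_fixed i j; rewrite !mxE.
Qed.

Lemma rank_subr1_ge : (n - 1 <= \rank (P - 1%:M)%R)%N.
Proof.
pose pr : 'rV[R]_n := \row_i pi i.
have ker_sub : (kermx (P - 1%:M) <= pr)%MS.
  apply/row_subP => k; set r := row k (kermx (P - 1%:M)).
  have rP : r *m P = r.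
    have : r *m (P - 1%:M) = 0 by rewrite /r -row_mul mulmx_ker row0.
    by rewrite mulmxBr mulmx1 => /eqP; rewrite subr_eq0 => /eqP.
  have -> : r = (r 0 k / pi k) *: pr.
    apply/rowP => i; rewrite [RHS]mxE [pr _ _]mxE.
    by rewrite -(reversible_fixed_row_prop rP i k) divfK.
  by rewrite scalemx_sub.
have := leq_trans (mxrankS ker_sub) (rank_leq_row pr).
by rewrite mxrank_ker; lia.
Qed.

(* An eigenvector for [-1] is fixed by the positive matrix [P ^+ (m + m)],
   hence constant, hence fixed by [P] itself. *)
Lemma eigenvalue_norm_lt1 a : eigenvalue P a -> a != 1 -> `|a| < 1.
Proof.
move=> /eigenvalueP [v vP v_neq0] a_neq1.
have [u u_neq0 Pu] := reversible_right_eigenvector vP v_neq0.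
rewrite lt_neqAle (row_stochastic_eigen_norm_le1 hP Pu u_neq0) andbT.
apply: contra_neq u_neq0 => /normr_eq1_neq1/(_ a_neq1) a_eqN1; subst a.
have [m Pm_gt0] := hprim.
have [_ P2m_sum1] := row_stochastic_exp hP (m + m).
have P2m_fixed : P ^+ (m + m) *m u = u.
  by rewrite (mulmx_exp_eigen Pu) -signr_odd addnn odd_double expr0 scale1r.
have u_const := pos_stochastic_fixed_const P2m_sum1
  (row_stochastic_expD_gt0 hP Pm_gt0 m) P2m_fixed.
apply/colP => i; have := congr1 (fun w : 'cV[R]_n => w i 0) Pu; rewrite !mxE.
under eq_bigr do rewrite (u_const _ i).
rewrite -mulr_suml hP.2 mul1r mulN1r => /eqP.
by rewrite -subr_eq0 opprK -mulr2n mulrn_eq0 /= => /eqP.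
Qed.

(* Conjugation by [diag (sqrt pi)] symmetrizes [P]. *)
Lemma reversible_similar_symmetric :
  exists S : 'M[R]_n, [/\ S^T = S, char_poly S = char_poly P,
    char_poly (- S) = char_poly (- P) & \rank (S - 1%:M) = \rank (P - 1%:M)].
Proof.
pose s i := Num.sqrt (pi i).
have s_neq0 i : s i != 0 by rewrite gt_eqF // sqrtr_gt0.
have s2 i : s i ^+ 2 = pi i by rewrite sqr_sqrtr // ltW.
pose D := diag_mx (\row_i s i); pose Dinv := diag_mx (\row_i (s i)^-1).
have DDinv : D *m Dinv = 1%:M.
  apply/matrixP => i j; rewrite mul_diag_mx !mxE.
  by case: eqVneq => [->|_]; rewrite ?mulr1n ?mulfV ?mulr0n ?mulr0.
have [D_unit Dinv_unit] := mulmx1_unit DDinv.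
exists (D *m P *m Dinv); split.
- apply/matrixP => i j; rewrite mxE mul_mx_diag mul_diag_mx !mxE.
  have := hrev j i; rewrite -(s2 i) -(s2 j) => rev_ji.
  transitivity (s j ^+ 2 * P j i / (s i * s j)); first by field; rewrite ?s_neq0.
  by rewrite rev_ji; field; rewrite ?s_neq0.
- exact: char_poly_conj.
- by rewrite -mulNmx -mulmxN char_poly_conj.
- have -> : D *m P *m Dinv - 1%:M = D *m (P - 1%:M) *m Dinv.
    by rewrite mulmxBr mulmxBl mulmx1 DDinv.
  rewrite mxrankMfree ?row_free_unit //.
  by rewrite (eqmxMfull _ (_ : row_full D)) // row_full_unit.
Qed.

End Reversible.

Section Dilation.
Variables (R : realType) (n : nat) (P : 'M[R]_n) (pi : 'I_n -> R).
Hypotheses (hP : row_stochastic P) (hprim : primitive P)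
  (hpi : stationary P pi) (hrev : reversible P pi)
  (pi_gt0 : forall i, 0 < pi i).

Lemma stationary_row_fixed : exists2 v : 'rV[R]_n, v *m P = v & v != 0.
Proof.
have [_ [pi_sum1 piP]] := hpi.
exists (\row_i pi i).
  by apply/rowP => j; rewrite !mxE -piP; apply: eq_bigr => i _; rewrite mxE.
apply/eqP => pi0; move: pi_sum1; rewrite (eq_bigr (fun=> 0)) ?big1_eq.
  by move/eqP; rewrite eq_sym oner_eq0.
by move=> i _; have := congr1 (fun w : 'rV[R]_n => w 0 i) pi0; rewrite !mxE.
Qed.

Lemma reversible_spectrum : exists es : seq R, [/\
  char_poly P = \prod_(x <- es) ('X - x%:P),
  char_poly (- P) = \prod_(x <- es) ('X - (- x)%:P) & count_mem 1 es = 1%N].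
Proof.
have [S [S_sym cS cNS rS]] := reversible_similar_symmetric hrev pi_gt0.
have [e [ce cNe card1]] := real_symmetric_spectrum S_sym.
have cP : char_poly P = \prod_(x <- [seq e i | i <- enum 'I_n]) ('X - x%:P).
  by rewrite -cS ce big_map big_enum.
exists [seq e i | i <- enum 'I_n]; split => //.
  by rewrite -cNS cNe big_map big_enum.
apply/anti_leq/andP; split.
  have -> : count_mem 1 [seq e i | i <- enum 'I_n] = #|[pred i | e i == 1%R]|.
    by rewrite count_map -size_filter enumT cardE.
  have := rank_subr1_ge hP hprim hrev pi_gt0; move: card1; rewrite rS; lia.
have [v vP v_neq0] := stationary_row_fixed.
rewrite -has_count has_pred1 -(eigenvalue_split_char_poly cP).
by apply/eigenvalueP; exists v; rewrite ?scale1r.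
Qed.

Lemma dilation_exp k : dilation pi (P ^+ k) = block_mx 0 (P ^+ k) (P ^+ k) 0.
Proof.
by rewrite /dilation (tstar_reversible pi_gt0 (reversible_exp hrev k)).
Qed.

Lemma gamma_ddagger_exp_le k lam gk :
  (0 < k)%N -> eigenvalue P lam -> lam != 1 ->
  gamma_ddagger pi (P ^+ k) gk -> gk <= 1 - `|lam| ^+ k.
Proof.
move=> k_gt0 lam_eig lam_neq1 [mu [[s [q [cD [q_roots [_ ->]]]]] ->]].
rewrite dilation_exp in cD; rewrite lerD2l lerN2.
have [v vP v_neq0] := stationary_row_fixed.
have one_in_s : 1 \in s.
  apply: eigenvalue_mem_roots cD q_roots _.
  rewrite -(normr1 R) -(expr1n _ k); apply: eigenvalue_antidiag_block_norm v_neq0.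
  by rewrite (exp_mulmx_eigen (a := 1)) ?scale1r.
have lam_in_s : `|lam| ^+ k \in s.
  apply: eigenvalue_mem_roots cD q_roots _.
  have /eigenvalueP [w wP w_neq0] := lam_eig.
  rewrite -normrX; apply: eigenvalue_antidiag_block_norm w_neq0.
  exact: exp_mulmx_eigen.
apply: second_largest_ge one_in_s lam_in_s _.
have lam_lt1 := eigenvalue_norm_lt1 hP hprim hrev pi_gt0 lam_eig lam_neq1.
by rewrite exprn_ilt1 // -lt0n.
Qed.

Lemma gamma_ddagger_abs_gap lam : eigenvalue P lam -> lam != 1 ->
  (forall lam', eigenvalue P lam' -> lam' != 1 -> `|lam'| <= `|lam|) ->
  gamma_ddagger pi P (1 - `|lam|).
Proof.
move=> lam_eig lam_neq1 lam_max.
have [es [cP cNP c1]] := reversible_spectrum.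
have es_eig := eigenvalue_split_char_poly cP.
have lam_lt1 := eigenvalue_norm_lt1 hP hprim hrev pi_gt0 lam_eig lam_neq1.
have N1_notin_es : -1 \notin es.
  rewrite -es_eig; apply/negP.
  move=> /(eigenvalue_norm_lt1 hP hprim hrev pi_gt0) N1_lt1.
  have : (-1 : R) != 1 by rewrite lt_eqF // (lt_trans (ltrN10 R)).
  by move/N1_lt1; rewrite normrN normr1 ltxx.
have cN1 : count_mem 1 (map -%R es) = 0%N.
  rewrite count_map (eq_count (a2 := pred1 (-1))); first exact/count_memPn.
  by move=> x /=; rewrite eqr_oppLR.
exists `|lam|; split=> //.
exists (es ++ map -%R es), 1; split; [|split; [|split]].
- have := dilation_exp 1; rewrite expr1 => ->.
  by rewrite char_poly_antidiag_block cP cNP mul1r big_cat big_map.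
- by move=> x; rewrite root1.
- have : (0 < size es)%N by move: c1; case: (es).
  by rewrite size_cat size_map; case: (size es) => // m _; rewrite addnS.
apply/esym/second_largest_eq => //.
- by rewrite count_cat c1 cN1.
- have [lam_ge0|lam_lt0] := lerP 0 lam.
    by rewrite ger0_norm // mem_cat -es_eig lam_eig.
  by rewrite ltr0_norm // mem_cat map_f ?orbT // -es_eig.
move=> x; rewrite mem_cat => /orP [x_es|/mapP [y y_es ->]] x_neq1.
  by rewrite (le_trans (ler_norm x)) // lam_max // es_eig.
have [->|y_neq1] := eqVneq y 1; first by rewrite (le_trans (lerN10 R)).
by rewrite (le_trans (ler_norm _)) // normrN lam_max // es_eig.
Qed.

End Dilation.

Theorem mainTheorem15 (R : realType) (n : nat) (P : 'M[R]_n) (pi : 'I_n -> R)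
  (hP : row_stochastic P) (hprim : primitive P)
  (hpi : stationary P pi) (hpos : forall i, 0 < pi i)
  (huniq : forall pi', stationary P pi' -> pi' =1 pi)
  (hrev : reversible P pi)
  (gstar : R) (hgstar : abs_spectral_gap P gstar) :
  gamma_dps pi P gstar.
Proof.
have [lam [lam_eig [lam_neq1 [-> lam_max]]]] := hgstar.
have lam_lt1 := eigenvalue_norm_lt1 hP hprim hrev hpos lam_eig lam_neq1.
split.
  exists 1%N; split => //; exists (1 - `|lam|); rewrite divr1; split => //.
  exact: gamma_ddagger_abs_gap.
move=> k k_gt0 gk gk_def; rewrite ler_pdivrMr ?ltr0n // mulrC.
apply: le_trans (gamma_ddagger_exp_le hP hprim hpi hrev hpos k_gt0 lam_eig
  lam_neq1 gk_def) _.
exact: one_sub_exprn_le (normr_ge0 lam) (ltW lam_lt1).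
Qed.
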